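(* Let $H$ be a connected false-twin-free graph with $|V(H)|\ge 7$, let $G=KB(H)$, let $q$ be a vertex of $G$ with $d_G(q)=2$, and let $B$ be the biclique of $H$ corresponding to $q$. Then one of the following holds: (1) $B$ induces $K_{1,1}$, say $B=\{v,w\}$ with $vw\in E(H)$, and there is a vertex $x$ with $N[v]=N[w]=\{v,w,x\}$ and such that $N(x)\setminus\{v,w\}$ is an independent set of $H$; (2) $B$ induces $K_{1,2}$, say with center $b$ and leaves $a,c$ (so $ab,bc\in E(H)$, $ac\notin E(H)$), and, after possibly exchanging the names of $a$ and $c$, $N(a)=\{b\}$ and $N(b)=\{a,c\}$.
   Context: All graphs are finite, simple, undirected and connected. A biclique of a graph $H$ is a maximal (with respect to vertex-set inclusion) set of vertices inducing a complete bipartite subgraph $K_{r,s}$ with $r,s\ge 1$. The biclique graph $KB(H)$ is the intersection graph of the family of all bicliques of $H$: its vertices are the bicliques of $H$, and two bicliques are adjacent iff they share at least one vertex. $N(u)$ denotes the open neighborhood of $u$ and $N[u]=N(u)\cup\{u\}$ the closed neighborhood. Two distinct vertices $u,v$ are false-twins if $N(u)=N(v)$; a graph is false-twin-free if it has no pair of false-twins. *)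

From mathcomp Require Import all_boot.
Set Implicit Arguments. Unset Strict Implicit. Unset Printing Implicit Defensive.

Definition simple_graph (T : finType) (e : rel T) : Prop :=
  symmetric e /\ irreflexive e.

Definition graph_connected (T : finType) (e : rel T) : Prop :=
  forall x y : T, connect e x y.

Definition nbhd (T : finType) (e : rel T) (u : T) : {set T} := [set y | e u y].
Definition cnbhd (T : finType) (e : rel T) (u : T) : {set T} := u |: nbhd e u.

Definition false_twin_free (T : finType) (e : rel T) : Prop :=
  forall u v : T, u != v -> nbhd e u != nbhd e v.

Definition independent (T : finType) (e : rel T) (S : {set T}) : Prop :=
  forall x y, x \in S -> y \in S -> ~~ e x y.

Definition induces_complete_bipartite (T : finType) (e : rel T) (S : {set T}) : Prop :=
  exists X Y : {set T},
    [/\ X != set0, Y != set0, [disjoint X & Y] & S = X :|: Y] /\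
    [/\ independent e X, independent e Y &
        forall x y, x \in X -> y \in Y -> e x y].

Definition biclique (T : finType) (e : rel T) (B : {set T}) : Prop :=
  induces_complete_bipartite e B /\
  forall B' : {set T}, B \subset B' -> induces_complete_bipartite e B' -> B' = B.

Definition kb_degree (T : finType) (e : rel T) (B : {set T}) (d : nat) : Prop :=
  exists S : {set {set T}},
    (forall B', B' \in S <-> [/\ biclique e B', B' != B & B :&: B' != set0])
    /\ #|S| = d.

From mathcomp Require Import all_boot zify.
From Stdlib Require Import Classical.
Set Implicit Arguments. Unset Strict Implicit. Unset Printing Implicit Defensive.

(* Let q be a vertex of degree 2 of KB(H) and B = X u Y its biclique, so that
   exactly two bicliques other than B meet B.  The whole argument rests on one
   mechanism: every complete bipartite set that meets both B and its
   complement (an edge leaving B, an induced path P3, a star) extends to a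
   biclique, which must then be one of these two "other" bicliques; and
   inside a complete bipartite set every vertex sees exactly one end of each
   edge.  Together with twin-freeness and connectivity (a nonempty set closed
   under neighbourhoods is all of V(H), so it has at least 7 vertices) this
   pins down the local structure.  We first prove general facts on complete
   bipartite sets, then fix B and split into cases:
   - triangle case: some z outside B is adjacent to both sides.  Then both
     sides are single vertices and conclusion (1) holds;
   - triangle-free case with both sides of size >= 2: impossible, by
     exhibiting a closed set of at most 6 vertices;
   - triangle-free case with a side {b}: a counting argument on the
     membership patterns of vertices in the two other bicliques shows that
     Y = {a, c} with a a leaf, which is conclusion (2). *)

Lemma card_pairs : #|[set: bool * bool]| = 4.
Proof. by rewrite cardsT card_prod card_bool. Qed.

Lemma card_pairs_but (p : bool * bool) : #|~: [set p]| = 3.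
Proof. by rewrite cardsCs setCK cards1 card_prod card_bool. Qed.

Lemma card_pairs2 (p q : bool * bool) : #|[set p; q]| <= 2.
Proof. by rewrite cards2; case: (p != q). Qed.

Section BicliqueGraph.
Variables (T : finType) (e : rel T).
Hypotheses (e_sym : symmetric e) (e_irr : irreflexive e).

Local Notation cb := (induces_complete_bipartite e).

Lemma edge_sym a b : e a b -> e b a.
Proof. by rewrite e_sym. Qed.

Lemma nedge_sym a b : ~~ e a b -> ~~ e b a.
Proof. by rewrite e_sym. Qed.

(* In a set inducing a complete bipartite graph, the two ends of an edge lie on
   opposite sides, so every third vertex is adjacent to exactly one of them. *)
Lemma cb_edge_split C a b c : cb C -> a \in C -> b \in C -> c \in C -> e a b ->
  e a c = ~~ e b c.
Proof.
case=> X [Y [[_ _ _ ->] [iX iY cXY]]]; rewrite !inE.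
case/orP=> ha; case/orP=> hb; case/orP=> hc eab.
- by move: (iX _ _ ha hb); rewrite eab.
- by move: (iX _ _ ha hb); rewrite eab.
- by rewrite (negbTE (iX _ _ ha hc)) (e_sym b c) (cXY _ _ hc hb).
- by rewrite (negbTE (iY _ _ hb hc)) (cXY _ _ ha hc).
- by rewrite (negbTE (iX _ _ hb hc)) (e_sym a c) (cXY _ _ hc ha).
- by rewrite (negbTE (iY _ _ ha hc)) (cXY _ _ hb hc).
- by move: (iY _ _ ha hb); rewrite eab.
- by move: (iY _ _ ha hb); rewrite eab.
Qed.

Lemma cb_no_triangle C a b c : cb C -> a \in C -> b \in C -> c \in C ->
  e a b -> e a c -> e b c -> False.
Proof.
move=> hC aC bC cC eab eac ebc.
by move: (cb_edge_split hC aC bC cC eab); rewrite eac ebc.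
Qed.

Lemma cb_edge_dominates C a b c : cb C -> a \in C -> b \in C -> c \in C ->
  e a b -> ~~ e a c -> ~~ e b c -> False.
Proof.
move=> hC aC bC cC eab nac nbc.
by move: (cb_edge_split hC aC bC cC eab); rewrite (negbTE nac) nbc.
Qed.

Lemma cb_join (P Q : {set T}) : (exists p, p \in P) -> (exists q, q \in Q) ->
  independent e P -> independent e Q ->
  (forall p q, p \in P -> q \in Q -> e p q) -> cb (P :|: Q).
Proof.
move=> [p pP] [q qQ] iP iQ cPQ; exists P, Q; split; split => //.
- by apply/set0Pn; exists p.
- by apply/set0Pn; exists q.
- rewrite -setI_eq0; apply/eqP/setP => v; rewrite !inE.
  by apply/negbTE/negP => /andP[vP vQ]; move: (cPQ _ _ vP vQ); rewrite e_irr.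
Qed.

Lemma independent1 c : independent e [set c].
Proof. by move=> x y; rewrite !inE => /eqP-> /eqP->; rewrite e_irr. Qed.

Lemma independent2 a b : ~~ e a b -> independent e [set a; b].
Proof.
move=> nab x y; rewrite !inE => /orP[]/eqP-> /orP[]/eqP->; rewrite ?e_irr //.
by rewrite e_sym.
Qed.

Lemma independent3 a b c : ~~ e a b -> ~~ e a c -> ~~ e b c ->
  independent e [set a; b; c].
Proof.
move=> nab nac nbc x y; rewrite !inE => /orP[/orP[]|]/eqP-> /orP[/orP[]|]/eqP->;
  rewrite ?e_irr // e_sym //.
Qed.

Lemma cb_star c (S : {set T}) : (exists s, s \in S) -> independent e S ->
  (forall s, s \in S -> e c s) -> cb ([set c] :|: S).
Proof.
move=> hS iS hc; apply: cb_join => //; first by exists c; rewrite inE.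
  exact: independent1.
by move=> p q; rewrite inE => /eqP->; apply: hc.
Qed.

Lemma cb_edge a b : e a b -> cb [set a; b].
Proof.
move=> eab; apply: cb_star; first by exists b; rewrite inE.
  exact: independent1.
by move=> s; rewrite inE => /eqP->.
Qed.

Lemma cb_path c a b : e c a -> e c b -> ~~ e a b -> cb [set c; a; b].
Proof.
move=> eca ecb nab; rewrite -setUA; apply: cb_star.
- by exists a; rewrite !inE eqxx.
- exact: independent2.
- by move=> s; rewrite !inE => /orP[]/eqP->.
Qed.

Lemma cb_has_nbr C v : cb C -> v \in C -> exists2 w, w \in C & e v w.
Proof.
case=> X [Y [[/set0Pn[x xX] /set0Pn[y yY] _ ->] [_ _ cXY]]].
rewrite inE => /orP[] vh.
- by exists y; rewrite ?inE ?yY ?orbT // cXY.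
- by exists x; rewrite ?inE ?xX // e_sym cXY.
Qed.

Lemma cb_grow (S : {set T}) : cb S ->
  biclique e S \/ exists2 S' : {set T}, S \proper S' & cb S'.
Proof.
move=> cbS.
case: (classic (forall S' : {set T}, S \subset S' -> cb S' -> S' = S)) => [hmax|hnot].
  by left.
right; apply: NNPP => hno; apply: hnot => S' sS' cbS'; apply: NNPP => nS'S.
apply: hno; exists S' => //.
by rewrite properEneq sS' andbT; apply/eqP => h; apply: nS'S.
Qed.

Lemma extend_to_biclique (S : {set T}) : cb S -> exists2 C, biclique e C & S \subset C.
Proof.
move: {2}#|~: S| (leqnn #|~: S|) => n; elim: n S => [|n IH] S hS cbS;
  case: (cb_grow cbS) => [bS|[S' pS' cbS']]; try by exists S.
all: have lt : #|~: S'| < #|~: S| by rewrite proper_card // properC.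
- lia.
- have [C bC sC] := IH S' ltac:(lia) cbS'.
  by exists C => //; apply: subset_trans (proper_sub pS') sC.
Qed.

Lemma card_le2 (A : {set T}) x :
  (forall a b, a \in A -> b \in A -> a != x -> b != x -> a = b) -> #|A| <= 2.
Proof.
move=> h; rewrite (cardsD1 x); have : #|A :\ x| <= 1.
  by apply/card_le1_eqP => a b; rewrite !inE => /andP[ax aA] /andP[bx bA]; apply: h.
by case: (x \in A) => /=; lia.
Qed.

Lemma card_le_pattern (A : {set T}) (P : {set bool * bool}) (f : T -> bool * bool) :
  {in A &, injective f} -> (forall v, v \in A -> f v \in P) -> #|A| <= #|P|.
Proof.
move=> inj hP; rewrite -(card_in_imset inj); apply: subset_leq_card.
by apply/subsetP => p /imsetP[v vA ->]; apply: hP.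
Qed.

Hypothesis e_twinfree : false_twin_free e.

Lemma twinfree_eq u v : (forall t, e u t = e v t) -> u = v.
Proof.
move=> h; apply: NNPP => /eqP nuv; move: (e_twinfree nuv).
by rewrite (_ : nbhd e u = nbhd e v) ?eqxx //; apply/setP => t; rewrite !inE h.
Qed.

Lemma twinfree_sep u v : u != v ->
  exists t, (e u t && ~~ e v t) \/ (e v t && ~~ e u t).
Proof.
move=> /eqP nuv; apply: NNPP => hn; apply: nuv; apply: twinfree_eq => t.
apply/idP/idP => h; apply: NNPP => h'; apply: hn; exists t.
- by left; rewrite h; apply/negP.
- by right; rewrite h; apply/negP.
Qed.

Hypothesis e_conn : graph_connected e.

(* In a connected graph, a nonempty set closed under taking neighbours is
   everything; this is how the bound 7 <= |V(H)| is contradicted. *)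
Lemma closed_set_full (A : {set T}) a : a \in A ->
  (forall u t, u \in A -> e u t -> t \in A) -> forall t, t \in A.
Proof.
move=> aA hA t.
have cl : closed e A.
  move=> x y exy; apply/idP/idP => h; first exact: hA h exy.
  by apply: hA h _; rewrite e_sym.
by rewrite -(closed_connect cl (e_conn a t)).
Qed.

Lemma closed_set_card (A : {set T}) a : a \in A ->
  (forall u t, u \in A -> e u t -> t \in A) -> #|T| <= #|A|.
Proof.
move=> aA hA; rewrite -cardsT; apply: subset_leq_card; apply/subsetP => t _.
exact: closed_set_full aA hA t.
Qed.

Section DegreeTwo.
Hypothesis card_T : 7 <= #|T|.
Variable B : {set T}.
Hypothesis B_biclique : biclique e B.
Variable others : {set {set T}}.
Hypothesis others_def :
  forall C, C \in others <-> [/\ biclique e C, C != B & B :&: C != set0].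
Hypothesis others_card : #|others| = 2.

(* The neighbours of B in KB(H): bicliques other than B that meet B. *)
Definition other (C : {set T}) := [/\ biclique e C, C != B & B :&: C != set0].

Lemma other_cb C : other C -> cb C.
Proof. by case=> [[]]. Qed.

Lemma other_of_cb (S : {set T}) v w : cb S -> v \in S -> v \in B ->
  w \in S -> w \notin B -> exists2 C, other C & S \subset C.
Proof.
move=> cS vS vB wS wB; have [C bC sC] := extend_to_biclique cS.
exists C => //; split => //.
- by apply/eqP => h; move: wB; rewrite -h (subsetP sC).
- by apply/set0Pn; exists v; rewrite inE vB (subsetP sC).
Qed.

Lemma other_edge u t : u \in B -> t \notin B -> e u t ->
  exists C, [/\ other C, u \in C & t \in C].
Proof.
move=> uB tB eut; have [C oC sC] := other_of_cb (cb_edge eut) (set21 u t) uB (set22 u t) tB.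
by exists C; rewrite !(subsetP sC) ?set21 ?set22.
Qed.

Lemma path_mem (c a b : T) :
  [/\ c \in [set c; a; b], a \in [set c; a; b] & b \in [set c; a; b]].
Proof. by rewrite !inE !eqxx !orbT. Qed.

Lemma other_path_in c a b : e c a -> e c b -> ~~ e a b -> c \in B -> b \notin B ->
  exists C, [/\ other C, c \in C, a \in C & b \in C].
Proof.
move=> eca ecb nab cB bB; have [cP aP bP] := path_mem c a b.
have [C oC sC] := other_of_cb (cb_path eca ecb nab) cP cB bP bB.
by exists C; rewrite !(subsetP sC).
Qed.

Lemma other_path_out c a b : e c a -> e c b -> ~~ e a b -> c \notin B -> b \in B ->
  exists C, [/\ other C, c \in C, a \in C & b \in C].
Proof.
move=> eca ecb nab cB bB; have [cP aP bP] := path_mem c a b.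
have [C oC sC] := other_of_cb (cb_path eca ecb nab) bP bB cP cB.
by exists C; rewrite !(subsetP sC).
Qed.

Lemma other_is_one_of D1 D2 C : other D1 -> other D2 -> D1 != D2 -> other C ->
  C = D1 \/ C = D2.
Proof.
move=> o1 o2 n12 oC; case: (eqVneq C D1) => [|nC1]; first by left.
case: (eqVneq C D2) => [|nC2]; first by right.
have sub : D1 |: (D2 |: [set C]) \subset others.
  by apply/subsetP => C'; rewrite !inE => /orP[/eqP->|/orP[]/eqP->]; apply/others_def.
have := subset_leq_card sub; rewrite others_card cardsU1 cardsU1 cards1 !inE.
by rewrite (negbTE n12) eq_sym (negbTE nC1) eq_sym (negbTE nC2).
Qed.

Record sides (X Y : {set T}) : Prop := Sides {
  sides_B : B = X :|: Y;
  sides_X0 : exists x, x \in X;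
  sides_Y0 : exists y, y \in Y;
  sides_indX : independent e X;
  sides_indY : independent e Y;
  sides_join : forall x y, x \in X -> y \in Y -> e x y }.

Lemma sides_sym X Y : sides X Y -> sides Y X.
Proof.
case=> hB hX hY iX iY cXY; split => //; first by rewrite setUC.
by move=> y x yY xX; rewrite e_sym cXY.
Qed.

Lemma sides_mem X Y t : sides X Y -> (t \in B) = (t \in X) || (t \in Y).
Proof. by case=> -> *; rewrite inE. Qed.

Lemma sides_memX X Y t : sides X Y -> t \in X -> t \in B.
Proof. by move=> hP tX; rewrite (sides_mem _ hP) tX. Qed.

Lemma sides_memY X Y t : sides X Y -> t \in Y -> t \in B.
Proof. by move=> hP tY; rewrite (sides_mem _ hP) tY orbT. Qed.

(* Maximality of B: no outside vertex is complete to X and anticomplete to Y. *)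
Lemma B_maximal X Y t : sides X Y -> t \notin B -> (forall x, x \in X -> e t x) ->
  (forall y, y \in Y -> ~~ e t y) -> False.
Proof.
move=> hP tB htX htY; case: B_biclique => _ hmax.
have cbt : cb (X :|: (t |: Y)).
  apply: cb_join; first exact: (sides_X0 hP).
  - by exists t; rewrite !inE eqxx.
  - exact: (sides_indX hP).
  - move=> a b; rewrite !inE => /orP[/eqP->|aY] /orP[/eqP->|bY].
    + by rewrite e_irr.
    + exact: htY.
    + by rewrite e_sym htY.
    + exact: (sides_indY hP aY bY).
  - move=> a b aX; rewrite !inE => /orP[/eqP->|bY]; first by rewrite e_sym htX.
    exact: (sides_join hP aX bY).
have sub : B \subset X :|: (t |: Y).
  by apply/subsetP => v; rewrite (sides_mem _ hP) !inE => /orP[]->; rewrite ?orbT.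
by move: tB; rewrite -(hmax _ sub cbt) !inE eqxx orbT.
Qed.

Lemma separator_out X Y xa xb t : sides X Y -> xa \in X -> xb \in X ->
  e xa t -> ~~ e xb t -> t \notin B.
Proof.
move=> hP xaX xbX ext nxbt; rewrite (sides_mem _ hP); apply/negP => /orP[] ht.
- by move: ext; rewrite (negbTE (sides_indX hP xaX ht)).
- by move: nxbt; rewrite (sides_join hP xbX ht).
Qed.

(* Triangle case: some z outside B is adjacent to x in X and to y in Y.
   Then the edges zx and zy lie in two distinct other bicliques Dx and Dy
   (they cannot share one, as xyz is a triangle), which are therefore the
   only other bicliques. *)
Record apex (X Y : {set T}) x y z (Dx Dy : {set T}) : Prop := Apex {
  ap_sides : sides X Y; ap_x : x \in X; ap_y : y \in Y; ap_zB : z \notin B;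
  ap_zx : e z x; ap_zy : e z y; ap_Dx : other Dx; ap_Dy : other Dy;
  ap_DxDy : Dx != Dy; ap_xDx : x \in Dx; ap_zDx : z \in Dx;
  ap_yDy : y \in Dy; ap_zDy : z \in Dy }.

Lemma apex_sym X Y x y z Dx Dy : apex X Y x y z Dx Dy -> apex Y X y x z Dy Dx.
Proof.
by case=> *; split => //; [exact: sides_sym | rewrite eq_sym].
Qed.

Lemma apex_other X Y x y z Dx Dy C :
  apex X Y x y z Dx Dy -> other C -> C = Dx \/ C = Dy.
Proof. by move=> H; exact: other_is_one_of (ap_Dx H) (ap_Dy H) (ap_DxDy H). Qed.

Lemma apex_x_notin_Dy X Y x y z Dx Dy :
  apex X Y x y z Dx Dy -> x \notin Dy.
Proof.
move=> H; have hP := ap_sides H.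
apply/negP => xDy; apply: (cb_no_triangle (other_cb (ap_Dy H)) xDy (ap_yDy H) (ap_zDy H)).
- exact: (sides_join hP (ap_x H) (ap_y H)).
- by rewrite e_sym (ap_zx H).
- by rewrite e_sym (ap_zy H).
Qed.

Lemma apex_other_x X Y x y z Dx Dy C :
  apex X Y x y z Dx Dy -> other C -> x \in C -> C = Dx.
Proof.
move=> H oC xC; case: (apex_other H oC) => // eC.
by move: (apex_x_notin_Dy H); rewrite -eC xC.
Qed.

Lemma apex_Dx_edge X Y x y z Dx Dy t :
  apex X Y x y z Dx Dy -> t \notin B -> e x t -> t \in Dx.
Proof.
move=> H tB ext.
have [C [oC xC tC]] := other_edge (sides_memX (ap_sides H) (ap_x H)) tB ext.
by rewrite -(apex_other_x H oC xC).
Qed.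

Lemma apex_nbr_x_nbr_y X Y x y z Dx Dy t :
  apex X Y x y z Dx Dy -> t \notin B -> e x t -> e y t.
Proof.
move=> H; have hP := ap_sides H => tB ext; apply: NNPP => /negP nyt.
have [C [oC xC yC tC]] :=
  other_path_in (sides_join hP (ap_x H) (ap_y H)) ext nyt (sides_memX hP (ap_x H)) tB.
by move: (apex_x_notin_Dy (apex_sym H)); rewrite -(apex_other_x H oC xC) yC.
Qed.

Lemma apex_sees_only_x X Y x y z Dx Dy w x' :
  apex X Y x y z Dx Dy -> w \notin B -> e w x -> e w y ->
  x' \in X -> e w x' -> x' = x.
Proof.
move=> H; have hP := ap_sides H => wB ewx ewy x'X ewx'.
have wDy : w \in Dy by apply: (apex_Dx_edge (apex_sym H)); rewrite // e_sym.
have inDx a : a \in X -> e w a -> a \in Dx.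
  move=> aX ewa; have [C [oC aC wC]] :=
    other_edge (sides_memX hP aX) wB (edge_sym ewa).
  case: (apex_other H oC) => eC; first by rewrite -eC.
  have yC : y \in C by rewrite eC (ap_yDy H).
  exfalso; apply: (cb_no_triangle (other_cb oC) aC yC wC).
  - exact: (sides_join hP aX (ap_y H)).
  - by rewrite e_sym.
  - by rewrite e_sym.
have sep a a' t : a \in X -> a' \in X -> e w a -> e w a' -> e a t -> ~~ e a' t -> False.
  move=> aX a'X ewa ewa' eat na't; have tB := separator_out hP aX a'X eat na't.
  have [C [oC aC tC]] := other_edge (sides_memX hP aX) tB eat.
  case: (apex_other H oC) => eC; rewrite eC in aC tC.
  - apply: (cb_edge_dominates (other_cb (ap_Dx H)) aC tC (inDx _ a'X ewa') eat).
      exact: (sides_indX hP aX a'X).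
    by rewrite e_sym.
  - apply: (cb_no_triangle (other_cb (ap_Dy H)) aC (ap_yDy H) wDy).
    + exact: (sides_join hP aX (ap_y H)).
    + by rewrite e_sym.
    + by rewrite e_sym.
apply: NNPP => /eqP nx; have [t [/andP[h1 h2]|/andP[h1 h2]]] := twinfree_sep nx.
- exact: (sep x' x t x'X (ap_x H) ewx' ewx h1 h2).
- exact: (sep x x' t (ap_x H) x'X ewx ewx' h1 h2).
Qed.

Lemma apex_X_in_Dy X Y x y z Dx Dy x' :
  apex X Y x y z Dx Dy -> x' \in X -> x' != x -> x' \in Dy.
Proof.
move=> H; have hP := ap_sides H => x'X nx.
have nzx' : ~~ e x' z.
  apply/negP => h; move: nx.
  by rewrite (apex_sees_only_x H (ap_zB H) (ap_zx H) (ap_zy H) x'X) ?eqxx // e_sym.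
have [C [oC yC x'C zC]] :=
  other_path_in (edge_sym (sides_join hP x'X (ap_y H))) (edge_sym (ap_zy H)) nzx'
                (sides_memY hP (ap_y H)) (ap_zB H).
by rewrite -(apex_other_x (apex_sym H) oC yC).
Qed.

Lemma apex_X_notin_Dx X Y x y z Dx Dy x' :
  apex X Y x y z Dx Dy -> x' \in X -> x' != x -> x' \notin Dx.
Proof.
move=> H; have hP := ap_sides H => x'X nx; apply/negP => x'Dx.
apply: (cb_edge_dominates (other_cb (ap_Dx H)) (ap_xDx H) (ap_zDx H) x'Dx).
- by rewrite e_sym (ap_zx H).
- exact: (sides_indX hP (ap_x H) x'X).
- apply/negP => ezx'; move: nx.
  by rewrite (apex_sees_only_x H (ap_zB H) (ap_zx H) (ap_zy H) x'X ezx') eqxx.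
Qed.

Lemma apex_unique X Y x y z Dx Dy w1 w2 :
  apex X Y x y z Dx Dy -> w1 \notin B -> e w1 x -> e w1 y ->
  w2 \notin B -> e w2 x -> e w2 y -> w1 = w2.
Proof.
move=> H; have hP := ap_sides H.
have out a b s : a \notin B -> e a x -> e a y -> b \notin B -> e b x -> e b y ->
    s \notin B -> e a s -> e b s.
  move=> aB eax eay bB ebx eby sB eas.
  have aDx := apex_Dx_edge H aB (edge_sym eax).
  have bDx := apex_Dx_edge H bB (edge_sym ebx).
  have nxs : ~~ e x s.
    apply/negP => exs; have sDx := apex_Dx_edge H sB exs.
    by apply: (cb_no_triangle (other_cb (ap_Dx H)) (ap_xDx H) aDx sDx); rewrite // e_sym.
  have [C [oC aC sC xC]] :=
    other_path_out eas eax (nedge_sym nxs) aB (sides_memX hP (ap_x H)).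
  have sDx : s \in Dx by rewrite -(apex_other_x H oC xC).
  have nab : e a b = false.
    move: (cb_edge_split (other_cb (ap_Dx H)) (ap_xDx H) aDx bDx (edge_sym eax)).
    by rewrite e_sym ebx => /esym/negbTE.
  move: (cb_edge_split (other_cb (ap_Dx H)) aDx sDx bDx eas); rewrite nab.
  by move=> /esym/negbFE; rewrite e_sym.
move=> w1B e1x e1y w2B e2x e2y; apply: twinfree_eq => s.
case sB : (s \in B); last first.
  by apply/idP/idP; [apply: out w1B _ _ w2B _ _ _|apply: out w2B _ _ w1B _ _ _]; rewrite ?sB.
move: sB; rewrite (sides_mem _ hP) => /orP[] hs; apply/idP/idP => h.
- by rewrite (apex_sees_only_x H w1B e1x e1y hs h).
- by rewrite (apex_sees_only_x H w2B e2x e2y hs h).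
- by rewrite (apex_sees_only_x (apex_sym H) w1B e1y e1x hs h).
- by rewrite (apex_sees_only_x (apex_sym H) w2B e2y e2x hs h).
Qed.

Lemma apex_x_out_nbr X Y x y z Dx Dy t :
  apex X Y x y z Dx Dy -> t \notin B -> e x t -> t = z.
Proof.
move=> H tB ext; apply: (apex_unique H tB _ _ (ap_zB H) (ap_zx H) (ap_zy H)).
- by rewrite e_sym.
- by rewrite e_sym (apex_nbr_x_nbr_y H tB ext).
Qed.

Lemma apex_z_nbr_Dx X Y x y z Dx Dy s :
  apex X Y x y z Dx Dy -> s \notin B -> e z s -> s \in Dx.
Proof.
move=> H; have hP := ap_sides H => sB ezs.
have nxs : ~~ e x s.
  by apply/negP => h; move: ezs; rewrite -(apex_x_out_nbr H sB h) e_irr.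
have [C [oC zC sC xC]] :=
  other_path_out ezs (ap_zx H) (nedge_sym nxs) (ap_zB H) (sides_memX hP (ap_x H)).
by rewrite -(apex_other_x H oC xC).
Qed.

Lemma apex_out_nbr_X X Y x y z Dx Dy x' t :
  apex X Y x y z Dx Dy -> x' \in X -> x' != x -> t \notin B -> e x' t ->
  [/\ e t z, ~~ e t x, ~~ e t y & forall x'', x'' \in X -> x'' != x -> e t x''].
Proof.
move=> H; have hP := ap_sides H => x'X nx tB ex't.
have x'Dy := apex_X_in_Dy H x'X nx.
have [C [oC x'C tC]] := other_edge (sides_memX hP x'X) tB ex't.
have tDy : t \in Dy.
  case: (apex_other H oC) => eC; last by rewrite -eC.
  by move: (apex_X_notin_Dx H x'X nx); rewrite -eC x'C.
have oDy := other_cb (ap_Dy H).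
have nyt : e y t = false.
  move: (cb_edge_split oDy x'Dy (ap_yDy H) tDy (sides_join hP x'X (ap_y H))).
  by rewrite ex't => /esym/negbTE.
have nxt : e x t = false.
  by apply/negP => h; move: nyt; rewrite (apex_nbr_x_nbr_y H tB h).
split.
- move: (cb_edge_split oDy (ap_yDy H) (ap_zDy H) tDy (edge_sym (ap_zy H))).
  by rewrite nyt => /esym/negbFE; rewrite e_sym.
- by rewrite e_sym nxt.
- by rewrite e_sym nyt.
- move=> x'' x''X nx''; have x''Dy := apex_X_in_Dy H x''X nx''.
  move: (cb_edge_split oDy x'Dy tDy x''Dy ex't).
  by rewrite (negbTE (sides_indX hP x'X x''X)) => /esym/negbFE.
Qed.

Lemma apex_X_small X Y x y z Dx Dy :
  apex X Y x y z Dx Dy -> #|X| <= 2.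
Proof.
move=> H; have hP := ap_sides H.
apply: (card_le2 (x := x)) => x1 x2 x1X x2X n1 n2; apply: twinfree_eq => s.
case sB : (s \in B); last first.
  apply/idP/idP => h.
  - by case: (apex_out_nbr_X H x1X n1 (negbT sB) h) => _ _ _ /(_ _ x2X n2); rewrite e_sym.
  - by case: (apex_out_nbr_X H x2X n2 (negbT sB) h) => _ _ _ /(_ _ x1X n1); rewrite e_sym.
move: sB; rewrite (sides_mem _ hP) => /orP[] hs.
- by rewrite (negbTE (sides_indX hP x1X hs)) (negbTE (sides_indX hP x2X hs)).
- by rewrite (sides_join hP x1X hs) (sides_join hP x2X hs).
Qed.

Lemma apex_z_nbr_Y X Y x y z Dx Dy s y' :
  apex X Y x y z Dx Dy -> s \notin B -> e z s -> y' \in Y -> y' != y -> e s y'.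
Proof.
move=> H sB ezs y'Y ny.
have y'Dx := apex_X_in_Dy (apex_sym H) y'Y ny.
have nzy' : e z y' = false.
  apply/negP => h; move: ny.
  by rewrite (apex_sees_only_x (apex_sym H) (ap_zB H) (ap_zy H) (ap_zx H) y'Y h) eqxx.
move: (cb_edge_split (other_cb (ap_Dx H)) (ap_zDx H) (apex_z_nbr_Dx H sB ezs) y'Dx ezs).
by rewrite nzy' => /esym/negbFE.
Qed.

Lemma apex_z_nbr_nbhd X Y x y z Dx Dy y' s q :
  apex X Y x y z Dx Dy -> y' \in Y -> y' != y -> s \notin B -> e z s ->
  e s q = [|| q == z, (q \in X) && (q != x) | (q \in Y) && (q != y)].
Proof.
move=> H; have hP := ap_sides H => y'Y ny sB ezs.
have oDx := other_cb (ap_Dx H); have sDx := apex_z_nbr_Dx H sB ezs.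
have nxs : ~~ e x s.
  by apply/negP => h; move: ezs; rewrite -(apex_x_out_nbr H sB h) e_irr.
have nys : ~~ e y s.
  by apply/negP => h; move: ezs; rewrite -(apex_x_out_nbr (apex_sym H) sB h) e_irr.
apply/idP/idP; last first.
  case/or3P => [/eqP->|/andP[qX nqx]|/andP[qY nqy]].
  - by rewrite e_sym.
  - exact: (apex_z_nbr_Y (apex_sym H) sB ezs qX nqx).
  - exact: (apex_z_nbr_Y H sB ezs qY nqy).
move=> esq; case qB : (q \in B).
  move: qB; rewrite (sides_mem _ hP) => /orP[] hq; apply/or3P.
  - by apply: Or32; rewrite hq; apply/eqP => qx; move: nxs; rewrite -qx e_sym esq.
  - by apply: Or33; rewrite hq; apply/eqP => qy; move: nys; rewrite -qy e_sym esq.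
apply/orP; left; apply/eqP; apply: NNPP => nqz.
have nxq : ~~ e x q by apply/negP => h; apply: nqz; exact: apex_x_out_nbr H (negbT qB) h.
case ey'q : (e y' q).
- have [eqz _ _ _] := apex_out_nbr_X (apex_sym H) y'Y ny (negbT qB) ey'q.
  have qDx := apex_z_nbr_Dx H (negbT qB) (edge_sym eqz).
  exact: (cb_no_triangle oDx (ap_zDx H) sDx qDx ezs (edge_sym eqz) esq).
- have esy' := apex_z_nbr_Y H sB ezs y'Y ny.
  have [C [oC sC qC y'C]] :=
    other_path_out esq esy' (nedge_sym (negbT ey'q)) sB (sides_memY hP y'Y).
  case: (apex_other H oC) => eC; rewrite eC in y'C qC.
  + exact: (cb_edge_dominates oDx sDx qC (ap_xDx H) esq (nedge_sym nxs) (nedge_sym nxq)).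
  + by move: (apex_X_notin_Dx (apex_sym H) y'Y ny); rewrite y'C.
Qed.

(* Hence y is the only vertex of Y: otherwise B, z and the (at most one, by
   twin-freeness) outside neighbour of z form a closed set of at most 6
   vertices. *)
Lemma apex_Y_single X Y x y z Dx Dy y' :
  apex X Y x y z Dx Dy -> y' \in Y -> y' != y -> False.
Proof.
move=> H; have hP := ap_sides H => y'Y ny.
pose S := [set s | (s \notin B) && e z s].
have nbhdS s q : s \in S ->
    e s q = [|| q == z, (q \in X) && (q != x) | (q \in Y) && (q != y)].
  by rewrite inE => /andP[sB ezs]; exact: apex_z_nbr_nbhd H y'Y ny sB ezs.
have S_small : #|S| <= 1.
  apply/card_le1_eqP => s1 s2 h1 h2; apply: twinfree_eq => q.
  by rewrite (nbhdS _ _ h1) (nbhdS _ _ h2).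
pose A := B :|: (z |: S).
have closedA u t : u \in A -> e u t -> t \in A.
  rewrite /A !inE => /orP[uB|/orP[/eqP->|/andP[uB ezu]]] eut.
  - case tB : (t \in B) => //=; move: uB; rewrite (sides_mem _ hP) => /orP[] hu.
    + case: (eqVneq u x) => [ux|nux].
        by rewrite ux in eut; rewrite (apex_x_out_nbr H (negbT tB) eut) eqxx.
      have [etz _ _ _] := apex_out_nbr_X H hu nux (negbT tB) eut.
      by rewrite e_sym etz orbT.
    + case: (eqVneq u y) => [uy|nuy].
        by rewrite uy in eut; rewrite (apex_x_out_nbr (apex_sym H) (negbT tB) eut) eqxx.
      have [etz _ _ _] := apex_out_nbr_X (apex_sym H) hu nuy (negbT tB) eut.
      by rewrite e_sym etz orbT.
  - by case: (t \in B) => //=; rewrite eut orbT.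
  - have uS : u \in S by rewrite inE uB ezu.
    move: eut; rewrite (nbhdS _ _ uS) => /or3P[/eqP->|/andP[tX _]|/andP[tY _]].
    + by rewrite eqxx orbT.
    + by rewrite (sides_memX hP tX).
    + by rewrite (sides_memY hP tY).
have zA : z \in A by rewrite !inE eqxx orbT.
have := closed_set_card zA closedA.
have cX := apex_X_small H; have cY := apex_X_small (apex_sym H).
have cB : #|B| <= #|X| + #|Y| by rewrite (sides_B hP); exact: (leq_card_setU _ _).1.
have cA : #|A| <= #|B| + #|S|.+1.
  apply: leq_trans (leq_card_setU _ _).1 _; rewrite leq_add2l cardsU1.
  by case: (z \notin S).
lia.
Qed.

Lemma apex_cnbhd X Y x y z Dx Dy :
  apex X Y x y z Dx Dy -> (forall a, a \in X -> a = x) -> (forall b, b \in Y -> b = y) ->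
  cnbhd e x = [set x; y; z].
Proof.
move=> H; have hP := ap_sides H => hX hY; apply/setP => t.
rewrite /cnbhd /nbhd !inE; apply/idP/idP.
- case/orP => [->//|ext]; case tB : (t \in B).
  + move: tB; rewrite (sides_mem _ hP) => /orP[] ht.
    * by move: ext; rewrite (hX _ ht) e_irr.
    * by rewrite (hY _ ht) eqxx orbT.
  + by rewrite (apex_x_out_nbr H (negbT tB) ext) eqxx !orbT.
- case/orP => [/orP[]|] /eqP->; rewrite ?eqxx //.
  + by rewrite (sides_join hP (ap_x H) (ap_y H)) orbT.
  + by rewrite e_sym (ap_zx H) orbT.
Qed.

Lemma apex_conclusion X Y x y z Dx Dy :
  apex X Y x y z Dx Dy -> (forall a, a \in X -> a = x) -> (forall b, b \in Y -> b = y) ->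
  [/\ B = [set x; y], e x y, z != x & z != y] /\
  [/\ cnbhd e x = [set x; y; z], cnbhd e y = [set x; y; z] &
      independent e (nbhd e z :\: [set x; y])].
Proof.
move=> H; have hP := ap_sides H => hX hY.
have eB : B = [set x; y].
  apply/setP => v; rewrite (sides_mem _ hP) !inE; apply/idP/idP.
  - by case/orP => [/hX->|/hY->]; rewrite eqxx ?orbT.
  - by case/orP => /eqP->; rewrite ?(ap_x H) ?(ap_y H) ?orbT.
split; split => //.
- exact: (sides_join hP (ap_x H) (ap_y H)).
- by apply/eqP => h; move: (ap_zB H); rewrite h (sides_memX hP (ap_x H)).
- by apply/eqP => h; move: (ap_zB H); rewrite h (sides_memY hP (ap_y H)).
- exact: apex_cnbhd H hX hY.
- rewrite (apex_cnbhd (apex_sym H) hY hX); apply/setP => v; rewrite !inE.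
  by case: (v == x); case: (v == y).
- move=> s s'; rewrite !inE => /andP[/norP[sx sy] ezs] /andP[/norP[s'x s'y] ezs'].
  have sB : s \notin B by rewrite eB !inE negb_or sx sy.
  have s'B : s' \notin B by rewrite eB !inE negb_or s'x s'y.
  have := cb_edge_split (other_cb (ap_Dx H)) (ap_zDx H) (apex_z_nbr_Dx H sB ezs)
                        (apex_z_nbr_Dx H s'B ezs') ezs.
  by rewrite ezs' => /esym.
Qed.

Lemma triangle_case X Y z x0 y0 : sides X Y -> z \notin B -> x0 \in X -> y0 \in Y ->
  e z x0 -> e z y0 ->
  exists v w x : T,
     [/\ B = [set v; w], e v w, x != v & x != w] /\
     [/\ cnbhd e v = [set v; w; x], cnbhd e w = [set v; w; x] &
         independent e (nbhd e x :\: [set v; w])].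
Proof.
move=> hP zB x0X y0Y ezx ezy.
have [Dx [oDx xDx zDx]] := other_edge (sides_memX hP x0X) zB (edge_sym ezx).
have [Dy [oDy yDy zDy]] := other_edge (sides_memY hP y0Y) zB (edge_sym ezy).
have nD : Dx != Dy.
  apply/eqP => h; rewrite h in xDx zDx.
  apply: (cb_no_triangle (other_cb oDy) xDx yDy zDx (sides_join hP x0X y0Y)).
    exact: edge_sym.
  exact: edge_sym.
have H : apex X Y x0 y0 z Dx Dy by split.
exists x0, y0, z; apply: (apex_conclusion H) => a aU; apply: NNPP => /eqP.
- exact: apex_Y_single (apex_sym H) aU.
- exact: apex_Y_single H aU.
Qed.

Definition apex_free (X Y : {set T}) :=
  forall t a b, t \notin B -> a \in X -> b \in Y -> e t a -> e t b -> False.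

Lemma apex_free_sym X Y : apex_free X Y -> apex_free Y X.
Proof. by move=> h t a b tB aY bX eta etb; exact: h tB bX aY etb eta. Qed.

(* An outside neighbour s of x in X sees nothing in Y, so x together with s
   and Y forms a star. *)
Lemma apex_free_star X Y x s : sides X Y -> apex_free X Y -> x \in X -> s \notin B ->
  e x s -> cb ([set x] :|: (s |: Y)).
Proof.
move=> hP hNT xX sB exs.
have nsY y : y \in Y -> ~~ e s y.
  by move=> yY; apply/negP => esy; apply: (hNT s x y sB xX yY) => //; rewrite e_sym.
apply: cb_star.
- by exists s; rewrite !inE eqxx.
- move=> a a'; rewrite !inE => /orP[/eqP->|aY] /orP[/eqP->|a'Y].
  + by rewrite e_irr.
  + exact: nsY.
  + by rewrite e_sym nsY.
  + exact: (sides_indY hP aY a'Y).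
- move=> a; rewrite !inE => /orP[/eqP->//|aY]; exact: (sides_join hP xX aY).
Qed.

Lemma apex_free_out_edge X Y D1 D2 x s : sides X Y -> apex_free X Y ->
  other D1 -> other D2 -> D1 != D2 -> (forall x', x' \in X -> x' \in D2) ->
  x \in X -> s \notin B -> e x s -> x \in D1 /\ s \in D1.
Proof.
move=> hP hNT oD1 oD2 nD XD2 xX sB exs.
have nsY y : y \in Y -> ~~ e s y.
  by move=> yY; apply/negP => esy; apply: (hNT s x y sB xX yY) => //; rewrite e_sym.
(* by maximality of B, s misses some x' of X *)
have [x' x'X nsx'] : exists2 x', x' \in X & ~~ e s x'.
  apply: NNPP => hn; apply: (B_maximal hP sB _ nsY) => a aX.
  by apply: NNPP => /negP h; apply: hn; exists a.
have [xS sS] : x \in [set x] :|: (s |: Y) /\ s \in [set x] :|: (s |: Y).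
  by rewrite !inE !eqxx !orbT.
have [C oC sC] :=
  other_of_cb (apex_free_star hP hNT xX sB exs) xS (sides_memX hP xX) sS sB.
have [xC sC'] := (subsetP sC _ xS, subsetP sC _ sS).
case: (other_is_one_of oD1 oD2 nD oC) => eC; rewrite eC in xC sC'; first by [].
exfalso; apply: (cb_edge_dominates (other_cb oD2) xC sC' (XD2 _ x'X) exs) => //.
exact: (sides_indX hP xX x'X).
Qed.

(* Configuration when both sides have at least two vertices: Y lies in the
   other biclique D1, X in D2, and xb in X, yb in Y have no neighbour
   outside B. *)
Record crossed (X Y D1 D2 : {set T}) (xb yb : T) : Prop := Crossed {
  cr_sides : sides X Y; cr_free : apex_free X Y;
  cr_D1 : other D1; cr_D2 : other D2; cr_D12 : D1 != D2;
  cr_YD1 : forall y, y \in Y -> y \in D1; cr_XD2 : forall x, x \in X -> x \in D2;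
  cr_xb : xb \in X; cr_yb : yb \in Y;
  cr_xb_in : forall s, s \notin B -> ~~ e xb s;
  cr_yb_in : forall s, s \notin B -> ~~ e yb s }.

Lemma crossed_sym X Y D1 D2 xb yb : crossed X Y D1 D2 xb yb -> crossed Y X D2 D1 yb xb.
Proof.
case=> *; split => //; [exact: sides_sym | exact: apex_free_sym | by rewrite eq_sym].
Qed.

Lemma crossed_out_edge X Y D1 D2 xb yb x s : crossed X Y D1 D2 xb yb ->
  x \in X -> s \notin B -> e x s -> x \in D1 /\ s \in D1.
Proof.
move=> H; exact: (apex_free_out_edge (cr_sides H) (cr_free H) (cr_D1 H) (cr_D2 H)
                                     (cr_D12 H) (cr_XD2 H)).
Qed.

Lemma crossed_out_nbr X Y D1 D2 xb yb x s x' : crossed X Y D1 D2 xb yb ->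
  x \in X -> s \notin B -> e x s -> x' \in X -> x' != xb -> e s x'.
Proof.
move=> H xX sB exs x'X nx'; have hP := cr_sides H.
apply: NNPP => /negP nsx'.
have [xD1 sD1] := crossed_out_edge H xX sB exs.
(* x' would have no outside neighbour, hence be a twin of xb *)
have nout s' : s' \notin B -> ~~ e x' s'.
  move=> s'B; apply/negP => ex's'.
  have [x'D1 _] := crossed_out_edge H x'X s'B ex's'.
  exact: (cb_edge_dominates (other_cb (cr_D1 H)) xD1 sD1 x'D1 exs
                            (sides_indX hP xX x'X) nsx').
move: nx'; rewrite (_ : x' = xb) ?eqxx //; apply: twinfree_eq => q.
case qB : (q \in B).
- move: qB; rewrite (sides_mem _ hP) => /orP[] hq.
  + by rewrite (negbTE (sides_indX hP x'X hq)) (negbTE (sides_indX hP (cr_xb H) hq)).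
  + by rewrite (sides_join hP x'X hq) (sides_join hP (cr_xb H) hq).
- by rewrite (negbTE (nout _ (negbT qB))) (negbTE (cr_xb_in H (negbT qB))).
Qed.

(* Hence all vertices of X other than xb are twins: |X| <= 2. *)
Lemma crossed_X_small X Y D1 D2 xb yb : crossed X Y D1 D2 xb yb -> #|X| <= 2.
Proof.
move=> H; have hP := cr_sides H.
apply: (card_le2 (x := xb)) => a a' aX a'X na na'; apply: twinfree_eq => q.
case qB : (q \in B).
- move: qB; rewrite (sides_mem _ hP) => /orP[] hq.
  + by rewrite (negbTE (sides_indX hP aX hq)) (negbTE (sides_indX hP a'X hq)).
  + by rewrite (sides_join hP aX hq) (sides_join hP a'X hq).
- apply/idP/idP => h.
  + by rewrite e_sym (crossed_out_nbr H aX (negbT qB) h a'X na').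
  + by rewrite e_sym (crossed_out_nbr H a'X (negbT qB) h aX na).
Qed.

Lemma crossed_out_nbr_in X Y D1 D2 xb yb x s s' : crossed X Y D1 D2 xb yb ->
  x \in X -> s \notin B -> e x s -> s' \notin B -> ~~ e s s'.
Proof.
move=> H xX sB exs s'B; have hP := cr_sides H; apply/negP => ess'.
have [xD1 sD1] := crossed_out_edge H xX sB exs.
have nsY y : y \in Y -> ~~ e s y.
  by move=> yY; apply/negP => esy; apply: (cr_free H sB xX yY) => //; rewrite e_sym.
case exs' : (e x s').
- have [_ s'D1] := crossed_out_edge H xX s'B exs'.
  exact: (cb_no_triangle (other_cb (cr_D1 H)) xD1 sD1 s'D1 exs exs' ess').
- have [C [oC sC s'C xC]] :=
    other_path_out ess' (edge_sym exs) (nedge_sym (negbT exs')) sB (sides_memX hP xX).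
  case: (other_is_one_of (cr_D1 H) (cr_D2 H) (cr_D12 H) oC) => eC; rewrite eC in xC sC s'C.
  + apply: (cb_edge_dominates (other_cb (cr_D1 H)) sC s'C (cr_YD1 H (cr_yb H)) ess').
      exact: nsY (cr_yb H).
    by rewrite e_sym (cr_yb_in H).
  + apply: (cb_edge_dominates (other_cb (cr_D2 H)) xC sC (cr_XD2 H (cr_xb H)) exs).
      exact: (sides_indX hP xX (cr_xb H)).
    by rewrite e_sym (cr_xb_in H).
Qed.

Lemma crossed_out_nbr_unique X Y D1 D2 xb yb x s x' s' : crossed X Y D1 D2 xb yb ->
  x \in X -> s \notin B -> e x s -> x' \in X -> s' \notin B -> e x' s' -> s = s'.
Proof.
move=> H xX sB exs x'X s'B ex's'; have hP := cr_sides H; apply: twinfree_eq => q.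
case qB : (q \in B).
- move: qB; rewrite (sides_mem _ hP) => /orP[] hq.
  + case: (eqVneq q xb) => [->|nq].
    * by rewrite !(e_sym _ xb) (negbTE (cr_xb_in H sB)) (negbTE (cr_xb_in H s'B)).
    * by rewrite (crossed_out_nbr H xX sB exs hq nq) (crossed_out_nbr H x'X s'B ex's' hq nq).
  + have n1 : e s q = false.
      by apply/negP => h; apply: (cr_free H sB xX hq) => //; rewrite e_sym.
    have n2 : e s' q = false.
      by apply/negP => h; apply: (cr_free H s'B x'X hq) => //; rewrite e_sym.
    by rewrite n1 n2.
- by rewrite (negbTE (crossed_out_nbr_in H xX sB exs (negbT qB)))
             (negbTE (crossed_out_nbr_in H x'X s'B ex's' (negbT qB))).
Qed.

(* In a crossed configuration, if xa in X and ya in Y have outside neighbours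
   t and u, then B u {t, u} is closed under taking neighbours and has at most
   2 + 2 + 2 vertices, contradicting |V(H)| >= 7. *)
Lemma crossed_impossible X Y D1 D2 xb yb xa t ya u : crossed X Y D1 D2 xb yb ->
  xa \in X -> t \notin B -> e xa t -> ya \in Y -> u \notin B -> e ya u -> False.
Proof.
move=> H xaX tB ext yaY uB eyu; have hP := cr_sides H; have H' := crossed_sym H.
pose A := B :|: [set t; u].
have closedA v q : v \in A -> e v q -> q \in A.
  rewrite /A !inE => hv evq; case qB : (q \in B) => //=.
  case vB : (v \in B).
  - move: vB; rewrite (sides_mem _ hP) => /orP[] hv'.
    + by rewrite -(crossed_out_nbr_unique H xaX tB ext hv' (negbT qB) evq) eqxx.
    + by rewrite -(crossed_out_nbr_unique H' yaY uB eyu hv' (negbT qB) evq) eqxx orbT.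
  - move: hv; rewrite vB /= => /orP[]/eqP ev; rewrite ev in evq.
    + by move: (crossed_out_nbr_in H xaX tB ext (negbT qB)); rewrite evq.
    + by move: (crossed_out_nbr_in H' yaY uB eyu (negbT qB)); rewrite evq.
have tA : t \in A by rewrite !inE eqxx orbT.
have cT := closed_set_card tA closedA.
have cX := crossed_X_small H; have cY := crossed_X_small H'.
have cB : #|B| <= #|X| + #|Y| by rewrite (sides_B hP); exact: (leq_card_setU _ _).1.
have cA : #|A| <= #|B| + 2.
  apply: leq_trans (leq_card_setU _ _).1 _; rewrite leq_add2l cards2.
  by case: (t != u).
clear -card_T cT cA cB cX cY; lia.
Qed.

Lemma separator_other X Y xa xb t : sides X Y -> apex_free X Y -> xa \in X -> xb \in X ->
  e xa t -> ~~ e xb t ->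
  exists C, [/\ other C, xb \notin C & forall y, y \in Y -> y \in C].
Proof.
move=> hP hNT xaX xbX ext nxbt; have tB := separator_out hP xaX xbX ext nxbt.
pose S := [set xa] :|: (t |: Y).
have [xaS tS YS] : [/\ xa \in S, t \in S & forall y, y \in Y -> y \in S].
  by split => [||y yY]; rewrite !inE ?eqxx ?yY ?orbT.
have [C oC sC] := other_of_cb (apex_free_star hP hNT xaX tB ext) xaS (sides_memX hP xaX) tS tB.
exists C; split => // [|y yY]; last by rewrite (subsetP sC) ?YS.
apply/negP => h; apply: (cb_edge_dominates (other_cb oC) (subsetP sC _ xaS)
                           (subsetP sC _ tS) h ext (sides_indX hP xaX xbX)).
by rewrite e_sym.
Qed.

(* Two vertices xa, xb of X separated by a vertex t, and two vertices ya, yb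
   of Y separated by u, yield a crossed configuration, which is impossible. *)
Lemma apex_free_separated X Y xa xb t ya yb u : sides X Y -> apex_free X Y ->
  xa \in X -> xb \in X -> e xa t -> ~~ e xb t ->
  ya \in Y -> yb \in Y -> e ya u -> ~~ e yb u -> False.
Proof.
move=> hP hNT xaX xbX ext nxbt yaY ybY eyu nybu.
have hP' := sides_sym hP; have hNT' := apex_free_sym hNT.
have [C1 [oC1 xbC1 YC1]] := separator_other hP hNT xaX xbX ext nxbt.
have [C2 [oC2 ybC2 XC2]] := separator_other hP' hNT' yaY ybY eyu nybu.
have nC : C1 != C2 by apply/eqP => h; move: xbC1; rewrite h XC2.
have xb_in s : s \notin B -> ~~ e xb s.
  move=> sB; apply/negP => h.
  by have [] := apex_free_out_edge hP hNT oC1 oC2 nC XC2 xbX sB h; rewrite (negbTE xbC1).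
have yb_in s : s \notin B -> ~~ e yb s.
  move=> sB; apply/negP => h; have nC' : C2 != C1 by rewrite eq_sym.
  by have [] := apex_free_out_edge hP' hNT' oC2 oC1 nC' YC1 ybY sB h; rewrite (negbTE ybC2).
have H : crossed X Y C1 C2 xb yb by split.
exact: crossed_impossible H xaX (separator_out hP xaX xbX ext nxbt) ext
                          yaY (separator_out hP' yaY ybY eyu nybu) eyu.
Qed.

Lemma apex_free_one_side_single X Y x0 x1 y0 y1 : sides X Y -> apex_free X Y ->
  x0 \in X -> x1 \in X -> x0 != x1 -> y0 \in Y -> y1 \in Y -> y0 != y1 -> False.
Proof.
move=> hP hNT x0X x1X nx y0Y y1Y ny.
have [t ht] := twinfree_sep nx; have [u hu] := twinfree_sep ny.
case: ht => /andP[h1 h2]; case: hu => /andP[h3 h4].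
- exact: apex_free_separated hP hNT x0X x1X h1 h2 y0Y y1Y h3 h4.
- exact: apex_free_separated hP hNT x0X x1X h1 h2 y1Y y0Y h3 h4.
- exact: apex_free_separated hP hNT x1X x0X h1 h2 y0Y y1Y h3 h4.
- exact: apex_free_separated hP hNT x1X x0X h1 h2 y1Y y0Y h3 h4.
Qed.

(* Star case: X = {b}.  Then N(b) = Y by maximality of B. *)
Lemma star_nbhd_b X Y b t : sides X Y -> apex_free X Y -> b \in X ->
  (forall a, a \in X -> a = b) -> e b t = (t \in Y).
Proof.
move=> hP hNT bX hX; apply/idP/idP => [ebt|tY]; last exact: (sides_join hP bX tY).
case tB : (t \in B).
- move: tB; rewrite (sides_mem _ hP) => /orP[] // /hX tb.
  by move: ebt; rewrite tb e_irr.
- exfalso; apply: (B_maximal hP (negbT tB)).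
  + by move=> a /hX ->; rewrite e_sym.
  + move=> y yY; apply/negP => ety.
    by apply: (hNT t b y (negbT tB) bX yY _ ety); rewrite e_sym.
Qed.

Record star (X Y D1 D2 : {set T}) (b y2 : T) : Prop := Star {
  st_sides : sides X Y; st_free : apex_free X Y;
  st_b : b \in X; st_X : forall a, a \in X -> a = b;
  st_D1 : other D1; st_D2 : other D2; st_D12 : D1 != D2;
  st_bD1 : b \in D1; st_bD2 : b \in D2;
  st_y2 : y2 \in Y; st_y2D2 : y2 \in D2; st_y2D1 : y2 \notin D1 }.

Section Star.
Variables (X Y D1 D2 : {set T}) (b y2 : T).
Hypothesis H : star X Y D1 D2 b y2.
Let hP := st_sides H.
Let oD1 := st_D1 H.
Let oD2 := st_D2 H.

Lemma star_other C : other C -> C = D1 \/ C = D2.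
Proof. exact: other_is_one_of oD1 oD2 (st_D12 H). Qed.

Lemma star_b_out w : w \notin B -> e b w = false.
Proof.
move=> wB; rewrite (star_nbhd_b _ hP (st_free H) (st_b H) (st_X H)).
by apply/negP => wY; move: wB; rewrite (sides_memY hP wY).
Qed.

Lemma star_b_in_other C : other C -> b \in C.
Proof. by case/star_other => ->; [exact: (st_bD1 H) | exact: (st_bD2 H)]. Qed.

(* Within an other biclique, Y and the outside of B are completely joined
   (b is adjacent to the former and not to the latter) ... *)
Lemma star_join_in_other C y t : other C -> y \in Y -> t \notin B ->
  y \in C -> t \in C -> e y t.
Proof.
move=> oC yY tB yC tC.
move: (cb_edge_split (other_cb oC) (star_b_in_other oC) yC tC
                     (sides_join hP (st_b H) yY)).
by rewrite (star_b_out tB) => /esym/negbFE.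
Qed.

Lemma star_Y_out_adj y t : y \in Y -> t \notin B ->
  e y t = (y \in D1) && (t \in D1) || (y \in D2) && (t \in D2).
Proof.
move=> yY tB; apply/idP/idP; last first.
  by case/orP => /andP[h1 h2]; [exact: star_join_in_other oD1 yY tB h1 h2
                               |exact: star_join_in_other oD2 yY tB h1 h2].
move=> eyt; have [C [oC yC bC tC]] :=
  other_path_in (edge_sym (sides_join hP (st_b H) yY)) eyt
                (negbT (star_b_out tB)) (sides_memY hP yY) tB.
by case: (star_other oC) => eC; rewrite eC in yC tC; rewrite yC tC ?orbT.
Qed.

Lemma star_out_nbr_covered u t : u \in B -> t \notin B -> e u t -> (t \in D1) || (t \in D2).
Proof.
move=> uB tB eut; have [C [oC uC tC]] := other_edge uB tB eut.
by case: (star_other oC) => eC; rewrite eC in tC; rewrite tC ?orbT.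
Qed.

Lemma star_other_meets_Y C : other C -> exists2 q, q \in Y & q \in C.
Proof.
move=> oC; have [q qC ebq] := cb_has_nbr (other_cb oC) (star_b_in_other oC).
by exists q => //; rewrite -(star_nbhd_b _ hP (st_free H) (st_b H) (st_X H)).
Qed.

(* By connectivity every vertex outside B lies in D1 or D2, since
   B u D1 u D2 is closed under taking neighbours. *)
Lemma star_out_covered t : t \notin B -> (t \in D1) || (t \in D2).
Proof.
move=> tB; pose A := B :|: (D1 :|: D2).
have closedA u s : u \in A -> e u s -> s \in A.
  rewrite /A !inE => hu eus; case sB : (s \in B) => //=.
  case uB : (u \in B); first exact: star_out_nbr_covered uB (negbT sB) eus.
  have inC C : other C -> u \in C -> (s \in D1) || (s \in D2).
    move=> oC uC; have [q qY qC] := star_other_meets_Y oC.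
    have equ : e q u := star_join_in_other oC qY (negbT uB) qC uC.
    case eqs : (e q s); first exact: star_out_nbr_covered (sides_memY hP qY) (negbT sB) eqs.
    have [C' [oC' uC' sC' qC']] :=
      other_path_out eus (edge_sym equ) (nedge_sym (negbT eqs)) (negbT uB) (sides_memY hP qY).
    by case: (star_other oC') => eC; rewrite eC in sC'; rewrite sC' ?orbT.
  by move: hu; rewrite uB /= => /orP[] h; [exact: inC oD1 h | exact: inC oD2 h].
have bA : b \in A by rewrite !inE (sides_memX hP (st_b H)).
by have := closed_set_full bA closedA t; rewrite !inE (negbTE tB).
Qed.

Lemma star_out_edge C u u' : other C -> u \notin B -> u' \notin B -> e u u' ->
  u \in C -> u' \notin C /\ (forall q, q \in Y -> q \in C -> e q u').
Proof.
move=> oC uB u'B euu' uC; have bC := star_b_in_other oC.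
have nbu : ~~ e u b by rewrite e_sym star_b_out.
have nbu' : ~~ e u' b by rewrite e_sym star_b_out.
split; first by apply/negP => u'C; apply: (cb_edge_dominates (other_cb oC) uC u'C bC euu').
move=> q qY qC; have equ := star_join_in_other oC qY uB qC uC.
apply: NNPP => /negP nqu'.
have [C' [oC' uC' u'C' qC']] :=
  other_path_out euu' (edge_sym equ) (nedge_sym nqu') uB (sides_memY hP qY).
exact: (cb_edge_dominates (other_cb oC') uC' u'C' (star_b_in_other oC') euu').
Qed.

Lemma star_out_independent u u' : u \notin B -> u' \notin B -> e u u' = false.
Proof.
move=> uB u'B; apply/negP => euu'.
(* an edge from D1 - D2 to D2 would make y2 adjacent to its D1-end *)
have cross p q : p \notin B -> q \notin B -> p \in D1 -> p \notin D2 ->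
    q \in D2 -> e p q -> False.
  move=> pB qB pD1 pD2 qD2 epq.
  have [_ hq] := star_out_edge oD2 qB pB (edge_sym epq) qD2.
  move: (star_Y_out_adj (st_y2 H) pB); rewrite (hq _ (st_y2 H) (st_y2D2 H)).
  by rewrite (negbTE (st_y2D1 H)) (negbTE pD2) andbF.
case/orP: (star_out_covered uB) => uD.
- have [u'D1 _] := star_out_edge oD1 uB u'B euu' uD.
  have u'D2 : u' \in D2 by move: (star_out_covered u'B); rewrite (negbTE u'D1).
  have [uD2 _] := star_out_edge oD2 u'B uB (edge_sym euu') u'D2.
  exact: cross uB u'B uD uD2 u'D2 euu'.
- have [u'D2 _] := star_out_edge oD2 uB u'B euu' uD.
  have u'D1 : u' \in D1 by move: (star_out_covered u'B); rewrite (negbTE u'D2) orbF.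
  have [uD1 _] := star_out_edge oD1 u'B uB (edge_sym euu') u'D1.
  exact: cross u'B uB u'D1 u'D2 uD (edge_sym euu').
Qed.

(* The membership pattern in (D1, D2) determines a vertex of Y, and a vertex
   outside B, up to false twins; hence it is injective on both sets. *)
Definition pattern (v : T) := (v \in D1, v \in D2).

Lemma star_pattern_injY : {in Y &, injective pattern}.
Proof.
move=> y y' yY y'Y [h1 h2]; apply: twinfree_eq => s.
case sB : (s \in B).
- move: sB; rewrite (sides_mem _ hP) => /orP[] hs.
  + by rewrite (st_X H hs) !(e_sym _ b) (sides_join hP (st_b H) yY)
               (sides_join hP (st_b H) y'Y).
  + by rewrite (negbTE (sides_indY hP yY hs)) (negbTE (sides_indY hP y'Y hs)).
- by rewrite (star_Y_out_adj yY (negbT sB)) (star_Y_out_adj y'Y (negbT sB)) h1 h2.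
Qed.

Lemma star_pattern_injW : {in ~: B &, injective pattern}.
Proof.
move=> u u'; rewrite !inE => uB u'B [h1 h2]; apply: twinfree_eq => s.
case sB : (s \in B).
- move: sB; rewrite (sides_mem _ hP) => /orP[] hs.
  + by rewrite (st_X H hs) !(e_sym _ b) (star_b_out uB) (star_b_out u'B).
  + by rewrite !(e_sym _ s) (star_Y_out_adj hs uB) (star_Y_out_adj hs u'B) h1 h2.
- by rewrite (star_out_independent uB (negbT sB)) (star_out_independent u'B (negbT sB)).
Qed.

Lemma star_pattern_out u : u \notin B -> pattern u != (false, false).
Proof. by move/star_out_covered; rewrite /pattern; case: (u \in D1); case: (u \in D2). Qed.

(* Counting patterns, first case: a vertex r outside B lies in both D1 and
   D2.  The biclique {b, r} u (Y n (D1 u D2)) extends to D2 (it contains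
   y2), so every vertex of Y in D1 is in D2.  Hence no vertex of Y has
   pattern (true, false), and an outside vertex in D2 but not in D1 would be
   a false twin of r. *)
Lemma star_count_shared_out r : r \notin B -> r \in D1 -> r \in D2 ->
  #|Y| <= 3 /\ #|~: B| <= 2.
Proof.
move=> rB rD1 rD2; pose Q := Y :&: (D1 :|: D2).
have cbQ : cb ([set b; r] :|: Q).
  apply: cb_join.
  - by exists b; rewrite !inE eqxx.
  - by exists y2; rewrite !inE (st_y2 H) (st_y2D2 H) orbT.
  - by apply: independent2; rewrite (star_b_out rB).
  - by move=> p q; rewrite !inE => /andP[pY _] /andP[qY _]; exact: (sides_indY hP pY qY).
  - move=> p q; rewrite !inE => /orP[]/eqP-> /andP[qY qD].
    + exact: (sides_join hP (st_b H) qY).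
    + by rewrite e_sym; case/orP: qD => qD; [exact: star_join_in_other oD1 qY rB qD rD1
                                              |exact: star_join_in_other oD2 qY rB qD rD2].
have [bQ rQ] : b \in [set b; r] :|: Q /\ r \in [set b; r] :|: Q by rewrite !inE !eqxx orbT.
have [C oC sC] := other_of_cb cbQ bQ (sides_memX hP (st_b H)) rQ rB.
have y2C : y2 \in C by rewrite (subsetP sC) // !inE (st_y2 H) (st_y2D2 H) !orbT.
have D1_D2 y : y \in Y -> y \in D1 -> y \in D2.
  move=> yY yD1.
  case: (star_other oC) => eC; first by move: (st_y2D1 H); rewrite -eC y2C.
  by rewrite -eC (subsetP sC) // !inE yY yD1 !orbT.
split.
- rewrite -(card_pairs_but (true, false)).
  apply: (card_le_pattern star_pattern_injY) => y yY.
  rewrite !inE /pattern; apply/eqP => -[h1 h2]; move: h2.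
  by rewrite (D1_D2 _ yY h1).
- apply: leq_trans (card_pairs2 (true, false) (true, true)).
  apply: (card_le_pattern star_pattern_injW) => u; rewrite inE => uB.
  rewrite !inE /pattern; case uD1 : (u \in D1); first by case: (u \in D2).
  have uD2 : u \in D2 by move: (star_out_covered uB); rewrite uD1.
  suff eur : u = r by move: uD1; rewrite eur rD1.
  apply: twinfree_eq => s; case sB : (s \in B).
  + move: sB; rewrite (sides_mem _ hP) => /orP[] hs.
    * by rewrite (st_X H hs) !(e_sym _ b) (star_b_out uB) (star_b_out rB).
    * rewrite !(e_sym _ s) (star_Y_out_adj hs uB) (star_Y_out_adj hs rB) uD1 uD2 rD1 rD2.
      by case sD1 : (s \in D1) => //=; rewrite (D1_D2 _ hs sD1).
  + by rewrite (star_out_independent uB (negbT sB)) (star_out_independent rB (negbT sB)).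
Qed.

(* Second case: no outside vertex in both, but some y in Y in both.  Then
   the outside vertices all lie in D1 \ D2, or all in D2 \ D1: outside
   vertices p in D1 and q in D2 would give a star at y over b, p, q
   contained in D1 or D2. *)
Lemma star_count_shared_Y y :
  (forall u, u \notin B -> u \in D1 -> u \in D2 -> False) ->
  y \in Y -> y \in D1 -> y \in D2 -> #|Y| <= 4 /\ #|~: B| <= 1.
Proof.
move=> nr yY yD1 yD2; split.
  by rewrite -card_pairs; apply: (card_le_pattern star_pattern_injY) => v _; rewrite inE.
have no_both p q : p \notin B -> p \in D1 -> q \notin B -> q \in D2 -> False.
  move=> pB pD1 qB qD2.
  have cbS : cb ([set y] :|: [set b; p; q]).
    apply: cb_star.
    - by exists b; rewrite !inE eqxx.
    - by apply: independent3;
        rewrite ?(star_b_out pB) ?(star_b_out qB) ?(star_out_independent pB qB).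
    - move=> v; rewrite !inE => /orP[/orP[]|]/eqP->.
      + by rewrite e_sym (sides_join hP (st_b H) yY).
      + exact: star_join_in_other oD1 yY pB yD1 pD1.
      + exact: star_join_in_other oD2 yY qB yD2 qD2.
  have [yS pS qS] : [/\ y \in [set y] :|: [set b; p; q], p \in [set y] :|: [set b; p; q]
                      & q \in [set y] :|: [set b; p; q]] by rewrite !inE !eqxx !orbT.
  have [C oC sC] := other_of_cb cbS yS (sides_memY hP yY) pS pB.
  have [pC qC] := (subsetP sC _ pS, subsetP sC _ qS).
  case: (star_other oC) => eC; rewrite eC in pC qC.
  + exact: nr qB qC qD2.
  + exact: nr pB pD1 pC.
case: (boolP [exists p, (p \notin B) && (p \in D1)]) => [/existsP[p /andP[pB pD1]]|/existsPn noD1].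
- rewrite -(cards1 (true, false)).
  apply: (card_le_pattern star_pattern_injW) => u; rewrite !inE => uB.
  have := star_pattern_out uB; rewrite /pattern.
  case uD2 : (u \in D2); first by case: (no_both p u pB pD1 uB uD2).
  by case: (u \in D1).
- rewrite -(cards1 (false, true)).
  apply: (card_le_pattern star_pattern_injW) => u; rewrite !inE => uB.
  have := star_pattern_out uB; rewrite /pattern.
  case uD1 : (u \in D1); first by move: (noD1 u); rewrite uB uD1.
  by case: (u \in D2).
Qed.

Lemma star_count_disjoint :
  (forall u, u \notin B -> u \in D1 -> u \in D2 -> False) ->
  (forall y, y \in Y -> y \in D1 -> y \in D2 -> False) -> #|Y| <= 3 /\ #|~: B| <= 2.
Proof.
move=> nr ny; split.
- rewrite -(card_pairs_but (true, true)).
  apply: (card_le_pattern star_pattern_injY) => y yY.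
  rewrite !inE /pattern; apply/eqP => -[h1 h2]; exact: ny yY h1 h2.
- apply: leq_trans (card_pairs2 (true, false) (false, true)).
  apply: (card_le_pattern star_pattern_injW) => u; rewrite inE => uB.
  have := star_pattern_out uB; rewrite !inE /pattern.
  case u1 : (u \in D1); case u2 : (u \in D2) => //.
  by case: (nr _ uB u1 u2).
Qed.

(* The star configuration is impossible: |V(H)| <= 1 + |Y| + |V - B| <= 6. *)
Lemma star_impossible : False.
Proof.
have cYW : #|Y| + #|~: B| <= 5.
  case: (boolP [exists r, [&& r \notin B, r \in D1 & r \in D2]]).
    case/existsP => r /and3P[rB rD1 rD2].
    by have [] := star_count_shared_out rB rD1 rD2; lia.
  move/existsPn => hr.
  have nr u : u \notin B -> u \in D1 -> u \in D2 -> False.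
    by move=> uB u1 u2; move: (hr u); rewrite uB u1 u2.
  case: (boolP [exists y, [&& y \in Y, y \in D1 & y \in D2]]).
    case/existsP => y /and3P[yY yD1 yD2].
    by have [] := star_count_shared_Y nr yY yD1 yD2; lia.
  move/existsPn => hy.
  have ny y : y \in Y -> y \in D1 -> y \in D2 -> False.
    by move=> yY yD1 yD2; move: (hy y); rewrite yY yD1 yD2.
  by have [] := star_count_disjoint nr ny; lia.
have cX : #|X| <= 1 by apply/card_le1_eqP => a a' /(st_X H) -> /(st_X H) ->.
have cB : #|B| <= #|X| + #|Y| by rewrite (sides_B hP); exact: (leq_card_setU _ _).1.
have := cardsC B; clear -card_T cYW cX cB; lia.
Qed.

End Star.

(* Two vertices y1, y2 of Y with outside neighbours w1, w2, where w1 misses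
   y2, produce the star configuration, which is impossible. *)
Lemma star_two_out_nbrs X Y b y1 y2 w1 w2 : sides X Y -> apex_free X Y -> b \in X ->
  (forall a, a \in X -> a = b) -> y1 \in Y -> y2 \in Y -> w1 \notin B -> e y1 w1 ->
  ~~ e y2 w1 -> w2 \notin B -> e y2 w2 -> False.
Proof.
move=> hP hNT bX hX y1Y y2Y w1B ey1w1 ny2w1 w2B ey2w2.
have nbw w : w \notin B -> ~~ e b w.
  by move=> wB; rewrite (star_nbhd_b _ hP hNT bX hX); apply: contra wB; exact: (sides_memY hP).
have [D1 [oD1 y1D1 bD1 w1D1]] := other_path_in (edge_sym (sides_join hP bX y1Y)) ey1w1
                                               (nbw _ w1B) (sides_memY hP y1Y) w1B.
have [D2 [oD2 y2D2 bD2 w2D2]] := other_path_in (edge_sym (sides_join hP bX y2Y)) ey2w2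
                                               (nbw _ w2B) (sides_memY hP y2Y) w2B.
have y2D1 : y2 \notin D1.
  apply/negP => h; apply: (cb_edge_dominates (other_cb oD1) y1D1 w1D1 h ey1w1).
    exact: (sides_indY hP y1Y y2Y).
  by rewrite e_sym.
have nD : D1 != D2 by apply/eqP => h; move: y2D1; rewrite h y2D2.
by apply: (@star_impossible X Y D1 D2 b y2); split.
Qed.

Lemma star_out_nbr_unique X Y b v v' t t' : sides X Y -> apex_free X Y -> b \in X ->
  (forall a, a \in X -> a = b) -> v \in Y -> v' \in Y -> t \notin B -> e v t ->
  t' \notin B -> e v' t' -> v = v'.
Proof.
move=> hP hNT bX hX vY v'Y tB evt t'B ev't'; apply: NNPP => /eqP nvv'.
have sep := separator_out (sides_sym hP).
have [s [/andP[h1 h2]|/andP[h1 h2]]] := twinfree_sep nvv'.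
- exact: star_two_out_nbrs hP hNT bX hX vY v'Y (sep _ _ _ vY v'Y h1 h2) h1 h2 t'B ev't'.
- exact: star_two_out_nbrs hP hNT bX hX v'Y vY (sep _ _ _ v'Y vY h1 h2) h1 h2 tB evt.
Qed.

Lemma star_leaf_nbhd X Y b v t : sides X Y -> b \in X -> (forall a, a \in X -> a = b) ->
  v \in Y -> (forall t, t \notin B -> ~~ e v t) -> e v t = (t == b).
Proof.
move=> hP bX hX vY hv; case tB : (t \in B).
- move: tB; rewrite (sides_mem _ hP) => /orP[] ht.
  + by rewrite (hX _ ht) eqxx e_sym (sides_join hP bX vY).
  + rewrite (negbTE (sides_indY hP vY ht)); apply/esym/eqP => tb.
    by move: (sides_join hP bX ht); rewrite tb e_irr.
- rewrite (negbTE (hv _ (negbT tB))); apply/esym/eqP => tb.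
  by move: tB; rewrite tb (sides_memX hP bX).
Qed.

(* Y is not a single vertex y: otherwise y has no outside neighbour, by
   maximality of B, and {b, y} is closed under taking neighbours. *)
Lemma star_Y_two X Y b y : sides X Y -> apex_free X Y -> b \in X ->
  (forall a, a \in X -> a = b) -> y \in Y -> exists2 y', y' \in Y & y' != y.
Proof.
move=> hP hNT bX hX yY; have nbB := star_nbhd_b _ hP hNT bX hX.
apply: NNPP => hn.
have hY v : v \in Y -> v = y by move=> vY; apply: NNPP => /eqP nv; apply: hn; exists v.
have noy t : t \notin B -> ~~ e y t.
  move=> tB; apply/negP => eyt.
  apply: (B_maximal (sides_sym hP) tB) => [a /hY ->|a /hX ->]; first by rewrite e_sym.
  by rewrite e_sym nbB; apply: contra tB; exact: (sides_memY hP).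
have closed_by v t : v \in [set b; y] -> e v t -> t \in [set b; y].
  rewrite !inE => /orP[]/eqP-> h.
  - by move: h; rewrite nbB => /hY ->; rewrite eqxx orbT.
  - by move: h; rewrite (star_leaf_nbhd _ hP bX hX yY noy) => ->.
have bA : b \in [set b; y] by rewrite !inE eqxx.
have := closed_set_card bA closed_by; rewrite cards2 => hT.
by move: hT; rewrite leqNgt => /negP; apply; apply: leq_ltn_trans card_T; case: (b != y).
Qed.

(* Conclusion (2) in the star case X = {b}: of two vertices of Y, exactly one,
   c, has a neighbour outside B, and the other one, a, is a leaf; by the
   uniqueness lemmas above, Y = {a, c}. *)
Lemma star_case X Y b : sides X Y -> apex_free X Y -> b \in X ->
  (forall a, a \in X -> a = b) ->
  exists a b' c : T,
    [/\ B = [set a; b'; c], e a b', e b' c & ~~ e a c] /\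
    [/\ a != c, nbhd e a = [set b'] & nbhd e b' = [set a; c]].
Proof.
move=> hP hNT bX hX; have nbB := star_nbhd_b _ hP hNT bX hX.
pose out v := [exists t, (t \notin B) && e v t].
have leaf v : v \in Y -> ~~ out v -> forall t, e v t = (t == b).
  move=> vY /existsPn hv t; apply: (star_leaf_nbhd _ hP bX hX vY) => s sB.
  by move: (hv s); rewrite sB.
have leaf_unique v v' : v \in Y -> v' \in Y -> ~~ out v -> ~~ out v' -> v = v'.
  by move=> vY v'Y h h'; apply: twinfree_eq => t; rewrite (leaf _ vY h) (leaf _ v'Y h').
have out_unique v v' : v \in Y -> v' \in Y -> out v -> out v' -> v = v'.
  move=> vY v'Y /existsP[t /andP[tB evt]] /existsP[t' /andP[t'B ev't']].
  exact: star_out_nbr_unique hP hNT bX hX vY v'Y tB evt t'B ev't'.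
have [y yY] := sides_Y0 hP; have [y' y'Y ny] := star_Y_two hP hNT bX hX yY.
have [a [c [aY cY nac la oc]]] : exists a c, [/\ a \in Y, c \in Y, a != c, ~~ out a & out c].
  case hy : (out y); case hy' : (out y').
  - by move: ny; rewrite (out_unique _ _ y'Y yY hy' hy) eqxx.
  - by exists y', y; rewrite hy' hy.
  - by exists y, y'; rewrite eq_sym hy hy'.
  - by move: ny; rewrite (leaf_unique _ _ y'Y yY (negbT hy') (negbT hy)) eqxx.
have eY : Y = [set a; c].
  apply/setP => v; rewrite !inE; apply/idP/idP; last by case/orP => /eqP->.
  move=> vY; case hv : (out v).
  - by rewrite (out_unique _ _ vY cY hv oc) eqxx orbT.
  - by rewrite (leaf_unique _ _ vY aY (negbT hv) la) eqxx.
have na : nbhd e a = [set b] by apply/setP => t; rewrite !inE (leaf _ aY la).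
have nb : nbhd e b = [set a; c] by apply/setP => t; rewrite !inE nbB eY !inE.
exists a, b, c; split; split => //.
- apply/setP => v; rewrite (sides_mem _ hP) eY !inE; apply/idP/idP.
  + by case/orP => [/hX->|/orP[]->]; rewrite ?eqxx ?orbT.
  + by case/orP => [/orP[]|] /eqP->; rewrite ?bX ?eqxx ?orbT.
- by rewrite (leaf _ aY la) eqxx.
- by rewrite nbB cY.
- by rewrite (leaf _ aY la); apply/eqP => cb; move: (sides_join hP bX cY); rewrite cb e_irr.
Qed.

Lemma degree_two_conclusion :
  (exists v w x : T,
     [/\ B = [set v; w], e v w, x != v & x != w] /\
     [/\ cnbhd e v = [set v; w; x], cnbhd e w = [set v; w; x] &
         independent e (nbhd e x :\: [set v; w])])
  \/
  (exists a b c : T,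
     [/\ B = [set a; b; c], e a b, e b c & ~~ e a c] /\
     [/\ a != c, nbhd e a = [set b] & nbhd e b = [set a; c]]).
Proof.
have [[X [Y [[X0 Y0 _ eB] [iX iY cXY]]]] _] := B_biclique.
have hP : sides X Y.
  by split => //; [case/set0Pn: X0 => v vX | case/set0Pn: Y0 => v vY]; exists v.
case: (classic (exists z x y, [/\ z \notin B, x \in X, y \in Y, e z x & e z y])).
  by case=> z [x [y [zB xX yY ezx ezy]]]; left; exact: triangle_case hP zB xX yY ezx ezy.
move=> hT; have hNT : apex_free X Y by move=> t a b tB aX bY eta etb; apply: hT; exists t, a, b.
have [x xX] := sides_X0 hP; have [y yY] := sides_Y0 hP.
have single (U : {set T}) u : u \in U -> ~ (exists2 u', u' \in U & u' != u) ->
    forall a, a \in U -> a = u.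
  by move=> uU hU a aU; apply: NNPP => /eqP na; apply: hU; exists a.
case: (classic (exists2 x', x' \in X & x' != x)) => [[x' x'X nx]|hX].
  case: (classic (exists2 y', y' \in Y & y' != y)) => [[y' y'Y ny]|hY].
    by case: (apex_free_one_side_single hP hNT x'X xX nx y'Y yY ny).
  by right; exact: star_case (sides_sym hP) (apex_free_sym hNT) yY (single _ _ yY hY).
by right; exact: star_case hP hNT xX (single _ _ xX hX).
Qed.

End DegreeTwo.
End BicliqueGraph.

Theorem lemma4 (T : finType) (e : rel T) (B : {set T}) :
  simple_graph e -> graph_connected e -> false_twin_free e -> 7 <= #|T| ->
  biclique e B -> kb_degree e B 2 ->
  (exists v w x : T,
     [/\ B = [set v; w], e v w, x != v & x != w] /\
     [/\ cnbhd e v = [set v; w; x], cnbhd e w = [set v; w; x] &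
         independent e (nbhd e x :\: [set v; w])])
  \/
  (exists a b c : T,
     [/\ B = [set a; b; c], e a b, e b c & ~~ e a c] /\
     [/\ a != c, nbhd e a = [set b] & nbhd e b = [set a; c]]).
Proof.
move=> [e_sym e_irr] e_conn e_twinfree card_T B_biclique [others [others_def others_card]].
exact: (degree_two_conclusion e_sym e_irr e_twinfree e_conn card_T B_biclique
                              others_def others_card).
Qed.
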